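(* Let $z_i=(x_i,y_i)$, $i=1,\dots,n$, be training data with $y_i\in\mathbb{R}$, and let $\ell(a,b)$ be a loss function that is continuous and differentiable almost everywhere, with $\ell'(a,b)=\partial\ell(a,b)/\partial b$. Index by $b$ the $B=n^n$ bootstrap samples (ordered $n$-tuples of indices in $\{1,\dots,n\}$), and for each $b$ let $\widehat{y_j}^{(b)}$ be the prediction for observation $j$ of the tree grown on sample $b$, assumed to be a deterministic function of $b$. Let $N_i^{(b)}$ be the number of times observation $i$ occurs in sample $b$ and $I_j^{(b)}=\mathbf{1}(N_j^{(b)}=0)$. For a weight vector $W=(w_1,\dots,w_n)$ with $\sum_i w_i=1$, let $g_W(b)$ be the probability of drawing bootstrap sample $b$ when each of the $n$ draws selects observation $k$ with probability $w_k$, and define $$S(\hat F_W)=\sum_{j=1}^n w_j\,\ell\!\left(y_j,\ \frac{\sum_b \widehat{y_j}^{(b)} I_j^{(b)} g_W(b)}{\sum_b I_j^{(b)} g_W(b)}\right).$$ Let $\hat F=\hat F_{W_0}$ with $W_0=(1/n,\dots,1/n)$, so $S(\hat F)=\frac1n\sum_j\ell(y_j,\widehat{y_j}^{\mathrm{OOB}})$ where $\widehat{y_j}^{\mathrm{OOB}}=\frac{\sum_b \widehat{y_j}^{(b)}I_j^{(b)}}{\sum_b I_j^{(b)}}$. For $\varepsilon$ near $0$ let $\hat F_{\varepsilon,i}$ put weight $\frac{1-\varepsilon}{n}+\varepsilon$ on $z_i$ and $\frac{1-\varepsilon}{n}$ on each $z_j$, $j\neq i$, and define $\hat D_i=\frac1n\frac{\partial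 S(\hat F_{\varepsilon,i})}{\partial\varepsilon}\big|_{\varepsilon=0}$. Then, with $e_n=(1-1/n)^{-n}$, $$\hat D_i=\frac1n\left\{\ell(y_i,\widehat{y_i}^{\mathrm{OOB}})-\frac1n\sum_j\ell(y_j,\widehat{y_j}^{\mathrm{OOB}})\right\}+\frac{e_n}{n}\sum_j \ell'(y_j,\widehat{y_j}^{\mathrm{OOB}})\left\{\frac1B\sum_b (N_i^{(b)}-1)I_j^{(b)}\big(\widehat{y_j}^{(b)}-\widehat{y_j}^{\mathrm{OOB}}\big)\right\}.$$
   Context: This is the out-of-bag (OOB) error of a bagged ensemble of trees under a general loss $\ell$, viewed as a functional $S$ of a weighted empirical distribution on the training data; $\hat D_i$ is $1/n$ times the empirical influence function of $S$. All sums over $b$ range over all $B=n^n$ bootstrap samples. *)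

From mathcomp Require Import all_boot all_order all_algebra.
From mathcomp Require Import all_classical all_reals all_analysis.
Set Implicit Arguments. Unset Strict Implicit. Unset Printing Implicit Defensive.
Import Order.TTheory GRing.Theory Num.Theory.
Local Open Scope ring_scope.

(* A bootstrap sample: an ordered n-tuple of indices in {0,...,n-1};
   there are exactly n^n of them. *)
Notation boot n := {ffun 'I_n -> 'I_n}.

Section Defs.
Variable R : realType.

Definition Ncount n (b : boot n) (i : 'I_n) : nat := #|[set k | b k == i]|.

Definition Iout n (b : boot n) (j : 'I_n) : R := (Ncount b j == 0%N)%:R.

Definition gW n (W : 'I_n -> R) (b : boot n) : R := \prod_(k < n) W (b k).

(* OOB-type weighted prediction for observation j under weights W;
   yhat j b is the prediction for j of the tree grown on sample b *)
Definition oob_predW n (W : 'I_n -> R) (yhat : 'I_n -> boot n -> R) (j : 'I_n) : R :=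
  (\sum_(b : boot n) yhat j b * Iout b j * gW W b) /
  (\sum_(b : boot n) Iout b j * gW W b).

Definition S_W n (ell : R -> R -> R) (y : 'I_n -> R) (yhat : 'I_n -> boot n -> R)
  (W : 'I_n -> R) : R :=
  \sum_(j < n) W j * ell (y j) (oob_predW W yhat j).

Definition W0 (n : nat) : 'I_n -> R := fun _ => n%:R^-1.
Arguments W0 : clear implicits.

Definition Weps n (i : 'I_n) (eps : R) : 'I_n -> R :=
  fun j => (1 - eps) / n%:R + (if j == i then eps else 0).

Definition yOOB n (yhat : 'I_n -> boot n -> R) (j : 'I_n) : R := oob_predW (W0 n) yhat j.

Definition ell' (ell : R -> R -> R) (a b : R) : R := derive1 (ell a) b.

Definition Dhat n (ell : R -> R -> R) (y : 'I_n -> R) (yhat : 'I_n -> boot n -> R)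
  (i : 'I_n) : R :=
  n%:R^-1 * derive1 (fun eps : R => S_W ell y yhat (Weps i eps)) 0.

Definition e_n (n : nat) : R := ((1 - n%:R^-1) ^+ n)^-1.

End Defs.

(* Moving the weights along W_eps = W0 + eps (delta_i - W0) turns each bootstrap
   probability g_{W_eps}(b) into a product of n affine functions of eps, whose
   derivative at 0 is n^(1-n) (N_i^(b) - 1).  Each OOB prediction is a ratio of
   two sums of such terms; its denominator at eps = 0 is n^-n (n-1)^n, since
   (n-1)^n samples omit a given observation, so the quotient rule gives the
   derivative n (n-1)^-n sum_b (N_i^(b) - 1) I_j^(b) (yhat_j^(b) - yhat_j^OOB),
   and n^n / (n-1)^n = e_n.  The product and chain rules applied to S finish. *)

From mathcomp Require Import all_boot all_order all_algebra.
From mathcomp Require Import all_classical all_reals all_analysis.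
From mathcomp Require Import ring.
Import Order.TTheory GRing.Theory Num.Theory.
Local Open Scope ring_scope.
Set Implicit Arguments. Unset Strict Implicit.

Section DeriveRules.
Variable R : realType.

Lemma is_derive_big_sum (I : Type) (s : seq I) (h : I -> R -> R) (dh : I -> R)
    (x : R) :
  (forall k, is_derive x 1 (h k) (dh k)) ->
  is_derive x 1 (fun e => \sum_(k <- s) h k e) (\sum_(k <- s) dh k).
Proof.
move=> hdh; rewrite -fct_sumE.
by elim/big_ind2 : _ => // *; [exact: is_derive_cst | exact: is_deriveD].
Qed.

Lemma is_derive_affine (c d x : R) : is_derive x 1 (fun e => c + e * d) d.
Proof.
apply: is_derive_eq (is_deriveD (is_derive_cst c x 1)
  (is_deriveM (is_derive_id x 1) (is_derive_cst d x 1))) _.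
by rewrite /GRing.scale /= mulr0 !add0r mulr1.
Qed.

Lemma is_derive_prod_affine m (c : R) (d : 'I_m -> R) :
  is_derive (0 : R) 1 (fun e => \prod_(k < m) (c + e * d k))
    (c ^+ m.-1 * \sum_(k < m) d k).
Proof.
elim: m d => [|m IH] d.
  rewrite big_ord0 mulr0; under eq_fun do rewrite big_ord0.
  exact: is_derive_cst.
under eq_fun do rewrite big_ord_recr /=.
apply: is_derive_eq (is_deriveM (IH _) (is_derive_affine c _ 0)) _.
have -> : \prod_(k < m) (c + 0 * d (widen_ord (leqnSn m) k)) = c ^+ m.
  by under eq_bigr do rewrite mul0r addr0; rewrite prodr_const card_ord.
rewrite big_ord_recr /= mul0r addr0 /GRing.scale /=.
case: m {IH} d => [|m] d.
  by rewrite big_ord0 !mulr0 !expr0 !mul1r addr0 add0r.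
by rewrite mulrA -exprS mulrDr addrC.
Qed.

Lemma is_derive_div (f g : R -> R) (x df dg : R) :
  g x != 0 -> is_derive x 1 f df -> is_derive x 1 g dg ->
  is_derive x 1 (fun e => f e / g e) ((df - f x / g x * dg) / g x).
Proof.
move=> gx0 hf hg; apply: is_derive_eq (is_deriveM hf (is_deriveV gx0 hg)) _.
by rewrite /GRing.scale /=; field.
Qed.

End DeriveRules.

Section Bootstrap.
Variables (R : realType) (n : nat) (i : 'I_n).

Let n_neq0 : (n%:R : R) != 0.
Proof. by rewrite pnatr_eq0 -lt0n (leq_ltn_trans _ (ltn_ord i)). Qed.

Definition contam_dir (k : 'I_n) : R := (k == i)%:R - n%:R^-1.

Lemma WepsE eps : Weps i eps = fun k => n%:R^-1 + eps * contam_dir k.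
Proof.
by apply/funext => k; rewrite /Weps /contam_dir; case: (k == i) => /=; field.
Qed.

Lemma Weps0 : Weps i 0 = @W0 R n.
Proof. by rewrite WepsE; apply/funext => k; rewrite mul0r addr0. Qed.

Lemma is_derive_Weps (x : R) (k : 'I_n) :
  is_derive x 1 (fun e => Weps i e k) (contam_dir k).
Proof. by under eq_fun do rewrite WepsE; exact: is_derive_affine. Qed.

Lemma sum_contam_dirE (f : 'I_n -> R) :
  \sum_(k < n) f k * contam_dir k = f i - n%:R^-1 * \sum_(k < n) f k.
Proof.
rewrite /contam_dir; under eq_bigr do rewrite mulrBr.
rewrite sumrB mulr_sumr (bigD1 i) //= eqxx mulr1 big1 ?addr0.
  by congr (_ - _); apply: eq_bigr => k _; rewrite mulrC.
by move=> k /negbTE ->; rewrite mulr0.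
Qed.

Lemma sum_contam_dir_boot (b : boot n) :
  \sum_(k < n) contam_dir (b k) = (Ncount b i)%:R - 1.
Proof.
rewrite /contam_dir sumrB sumr_const card_ord -[n%:R^-1 *+ n]mulr_natr mulVf //.
congr (_ - _); rewrite /Ncount -sum1_card natr_sum [RHS]big_mkcond.
by apply: eq_bigr => k _; rewrite inE; case: (b k == i).
Qed.

Lemma gW_W0 (b : boot n) : gW (@W0 R n) b = n%:R^-1 ^+ n.
Proof. by rewrite /gW /W0 prodr_const card_ord. Qed.

Lemma is_derive_gW_Weps (b : boot n) :
  is_derive (0 : R) 1 (fun e => gW (Weps i e) b)
    (n%:R^-1 ^+ n.-1 * ((Ncount b i)%:R - 1)).
Proof.
rewrite -sum_contam_dir_boot /gW; under eq_fun do rewrite WepsE.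
exact: is_derive_prod_affine.
Qed.

Lemma card_boot_avoiding (j : 'I_n) :
  #|[set b : boot n | Ncount b j == 0%N]| = (n.-1 ^ n)%N.
Proof.
have -> : [set b : boot n | Ncount b j == 0%N] = [set b in ffun_on (predC1 j)].
  apply/setP => b; rewrite !inE /Ncount cards_eq0.
  apply/eqP/ffun_onP => [b_avoids k | b_avoids].
    by apply/negP => /eqP bkj; move/setP/(_ k): b_avoids; rewrite !inE bkj eqxx.
  by apply/setP => k; rewrite !inE; apply/negbTE; exact: b_avoids.
by rewrite cardsE card_ffun_on cardC1 !card_ord.
Qed.

Lemma sum_Iout (j : 'I_n) : \sum_(b : boot n) Iout R b j = (n.-1 ^ n)%:R.
Proof.
rewrite -(card_boot_avoiding j) -sum1_card natr_sum [RHS]big_mkcond.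
by apply: eq_bigr => b _; rewrite inE /Iout; case: (Ncount b j == 0%N).
Qed.

Lemma e_nE : e_n R n = (n ^ n)%:R / (n.-1 ^ n)%:R.
Proof.
rewrite /e_n (_ : 1 - n%:R^-1 = n.-1%:R / n%:R).
  by rewrite expr_div_n invf_div !natrX.
by rewrite -subn1 natrB ?(leq_ltn_trans _ (ltn_ord i)) // mulrBl mul1r mulfV.
Qed.

Lemma is_derive_oob_predW_Weps (yhat : 'I_n -> boot n -> R) (j : 'I_n) :
  (1 < n)%N ->
  is_derive (0 : R) 1 (fun e => oob_predW (Weps i e) yhat j)
    (n%:R / (n.-1 ^ n)%:R *
     \sum_(b : boot n) ((Ncount b i)%:R - 1) * Iout R b j *
                        (yhat j b - yOOB yhat j)).
Proof.
move=> n_gt1; set c : R := n%:R^-1; set K : R := (n.-1 ^ n)%:R.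
have K_neq0 : K != 0.
  by rewrite pnatr_eq0 expn_eq0 negb_and -lt0n -subn1 subn_gt0 n_gt1.
have denom0 : \sum_(b : boot n) Iout R b j * gW (Weps i 0) b = c ^+ n * K.
  rewrite Weps0; under eq_bigr do rewrite gW_W0.
  by rewrite -mulr_suml sum_Iout mulrC.
have denom0_neq0 : \sum_(b : boot n) Iout R b j * gW (Weps i 0) b != 0.
  by rewrite denom0 mulf_neq0 // expf_neq0 // invr_eq0.
have dterm a b : is_derive (0 : R) 1 (fun e => a * gW (Weps i e) b)
    (a * (c ^+ n.-1 * ((Ncount b i)%:R - 1))).
  exact: (is_deriveZ a (is_derive_gW_Weps b)).
apply: is_derive_eq (is_derive_div denom0_neq0
  (is_derive_big_sum _ (fun b => dterm (yhat j b * Iout R b j) b))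
  (is_derive_big_sum _ (fun b => dterm (Iout R b j) b))) _.
have -> : (\sum_b yhat j b * Iout R b j * gW (Weps i 0) b) /
          (\sum_b Iout R b j * gW (Weps i 0) b) = yOOB yhat j.
  by rewrite /yOOB -Weps0.
rewrite denom0 mulr_sumr -sumrB.
set T := \sum_b _ * _ * (yhat j b - _).
rewrite (_ : \sum_b _ = c ^+ n.-1 * T); last first.
  by rewrite /T mulr_sumr; apply: eq_bigr => b _; ring.
have cE : c ^+ n = c * c ^+ n.-1 by rewrite -exprS prednK // ltnW.
by rewrite cE /c; field; rewrite K_neq0 n_neq0 expf_neq0 ?invr_eq0.
Qed.

Lemma is_derive_S_W (ell : R -> R -> R) (y : 'I_n -> R)
    (yhat : 'I_n -> boot n -> R) (W : R -> 'I_n -> R) (x : R)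
    (dW dP : 'I_n -> R) :
  (forall j, is_derive x 1 (W^~ j) (dW j)) ->
  (forall j, is_derive x 1 (fun e => oob_predW (W e) yhat j) (dP j)) ->
  (forall j, derivable (ell (y j)) (oob_predW (W x) yhat j) 1) ->
  is_derive x 1 (fun e => S_W ell y yhat (W e))
    (\sum_(j < n) (W x j * (ell' ell (y j) (oob_predW (W x) yhat j) * dP j) +
                   ell (y j) (oob_predW (W x) yhat j) * dW j)).
Proof.
move=> dW_W dP_P ell_der; apply: is_derive_big_sum => j.
have dell := @is_derive1_comp _ (ell (y j)) (fun e => oob_predW (W e) yhat j) x
  _ _ (derivableP (ell_der j)) (dP_P j).
apply: is_derive_eq (is_deriveM (dW_W j) dell) _.
by rewrite /ell' derive1E /GRing.scale /=.
Qed.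

End Bootstrap.

Theorem theorem2 (R : realType) (n : nat) (hn : (2 <= n)%N)
  (ell : R -> R -> R) (y : 'I_n -> R) (yhat : 'I_n -> boot n -> R) (i : 'I_n)
  (hell : forall j : 'I_n, derivable (ell (y j)) (yOOB yhat j) 1) :
  derivable (fun eps : R => S_W ell y yhat (Weps i eps)) 0 1 /\
  Dhat ell y yhat i =
    n%:R^-1 * (ell (y i) (yOOB yhat i)
               - n%:R^-1 * \sum_(j < n) ell (y j) (yOOB yhat j))
    + e_n R n / n%:R *
      \sum_(j < n) ell' ell (y j) (yOOB yhat j) *
        ((n ^ n)%:R^-1 *
         \sum_(b : boot n) ((Ncount b i)%:R - 1) * Iout R b j *
                            (yhat j b - yOOB yhat j)).
Proof.
have ell_der j : derivable (ell (y j)) (oob_predW (Weps i 0) yhat j) 1.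
  by rewrite Weps0; exact: hell.
have [S_der S_val] := is_derive_S_W (is_derive_Weps i 0)
  (fun j => is_derive_oob_predW_Weps i yhat j hn) ell_der.
split => //.
rewrite /Dhat derive1E S_val Weps0 -[oob_predW (@W0 R n) yhat]/(yOOB yhat).
rewrite big_split /= sum_contam_dirE mulrDr addrC; congr (_ + _).
rewrite (e_nE R i).
have n_neq0 : (n%:R : R) != 0 by rewrite pnatr_eq0 -lt0n ltnW.
have pred_n_neq0 : (n.-1%:R : R) != 0.
  by rewrite pnatr_eq0 -lt0n -subn1 subn_gt0.
rewrite !mulr_sumr; apply: eq_bigr => j _; rewrite /W0 !natrX.
by field; rewrite n_neq0 !expf_neq0.
Qed.
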